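(* Let $d\ge2$ and let $\mathcal{F}\subseteq\binom{\mathbb{N}}{d}$ be a finite family which is both left-compressed and right-compressed. Then $\mathcal{F}$ is shifted.
   Context: $\mathbb{N}=\{1,2,3,\dots\}$, $\mathbb{N}_{>k}=\{k+1,k+2,\dots\}$. $\binom{S}{d}$ is the set of $d$-element subsets of $S$; elements are written $\mathbf{u}=(u_1,\ldots,u_d)$ with $u_1<\cdots<u_d$. The squashed order: $\mathbf{u}<\mathbf{v}$ iff the largest element of the symmetric difference of $\mathbf{u},\mathbf{v}$ belongs to $\mathbf{v}$. A finite family in $\binom{\mathbb{N}}{e}$ (resp. $\binom{\mathbb{N}_{>k}}{e}$) is compressed in it if it consists of the smallest elements of $\binom{\mathbb{N}}{e}$ (resp. $\binom{\mathbb{N}_{>k}}{e}$) in the squashed order. For $\mathcal{F}\subseteq\binom{\mathbb{N}}{d}$ and $k\ge1$: $\widehat{\mathcal{F}}_{1,k}=\{\widehat{\mathbf{u}}\in\binom{\mathbb{N}}{d-1}\mid \{k\}\cup\widehat{\mathbf{u}}\in\mathcal{F},\ \min\widehat{\mathbf{u}}>k\}\subseteq\binom{\mathbb{N}_{>k}}{d-1}$ and $\widehat{\mathcal{F}}_{d,k}=\{\widehat{\mathbf{u}}\in\binom{\mathbb{N}}{d-1}\mid \widehat{\mathbf{u}}\cup\{k\}\in\mathcal{F},\ \max\widehat{\mathbf{u}}<k\}$. $\mathcal{F}$ is left-compressed if $\widehat{\mathcal{F}}_{1,k}$ is compressed in $\binom{\mathbb{N}_{>k}}{d-1}$ for every $k\ge1$,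 and right-compressed if $\widehat{\mathcal{F}}_{d,k}$ is compressed in $\binom{\mathbb{N}}{d-1}$ for every $k\ge1$. The Borel order: $\mathbf{v}\le_B\mathbf{u}$ iff $v_i\le u_i$ for all $i$; $\mathcal{F}$ is shifted if $\mathbf{v}\in\mathcal{F}$ whenever $\mathbf{v}\le_B\mathbf{u}$ for some $\mathbf{u}\in\mathcal{F}$. *)

From mathcomp Require Import all_boot.
Set Implicit Arguments. Unset Strict Implicit. Unset Printing Implicit Defensive.

(* A finite subset of N (or N_{>k}) is represented by its strictly increasing
   list of elements u = [:: u_1; ...; u_e] with u_1 < ... < u_e. *)

Definition dset (k e : nat) (u : seq nat) : bool :=
  [&& sorted ltn u, size u == e & all (fun x => k < x) u].

Definition sq_lt (u v : seq nat) : Prop :=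
  exists m, [/\ m \in v, m \notin u & forall x, m < x -> (x \in u) = (x \in v)].

(* G (a family given as a predicate) is compressed in binom(N_{>k}, e):
   it is a family in binom(N_{>k}, e) consisting of the smallest elements
   in squashed order, i.e. it is downward closed in squashed order. *)
Definition compressed_in (k e : nat) (G : seq nat -> bool) : Prop :=
  (forall v, G v -> dset k e v) /\
  (forall u v, G v -> dset k e u -> sq_lt u v -> G u).

Definition left_slice (d : nat) (F : seq (seq nat)) (k : nat) (u : seq nat) : bool :=
  [&& dset 0 d.-1 u, all (fun x => k < x) u & (k :: u) \in F].

Definition right_slice (d : nat) (F : seq (seq nat)) (k : nat) (u : seq nat) : bool :=
  [&& dset 0 d.-1 u, all (fun x => x < k) u & rcons u k \in F].

Definition left_compressed (d : nat) (F : seq (seq nat)) : Prop :=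
  forall k, 1 <= k -> compressed_in k d.-1 (left_slice d F k).

Definition right_compressed (d : nat) (F : seq (seq nat)) : Prop :=
  forall k, 1 <= k -> compressed_in 0 d.-1 (right_slice d F k).

Definition borel_le (v u : seq nat) : bool := all2 leq v u.

Definition shifted (d : nat) (F : seq (seq nat)) : Prop :=
  forall u v, u \in F -> dset 0 d v -> borel_le v u -> v \in F.

(* Shiftedness amounts to closure under lowering one coordinate of a d-set.
   Replacing an element by a smaller one moves a set down in squashed order.
   If the lowered coordinate is not the last one, the set and its image lie in
   the same right slice (at their common maximum k), so right-compression keeps
   the image in F; lowering the last coordinate stays inside the left slice at
   the common minimum, which exists since d >= 2, and left-compression applies.
   A Borel-smaller v is reached from u by lowering coordinates from left to
   right, and each intermediate list [v_1, ..., v_i, u_(i+1), ..., u_d] is still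
   strictly increasing. *)

From mathcomp Require Import all_boot.

Set Implicit Arguments.
Unset Strict Implicit.
Unset Printing Implicit Defensive.

Lemma sorted_ltn_cat_cons (a c : seq nat) (y : nat) :
  sorted ltn (a ++ y :: c) -> all (ltn^~ y) a /\ all (ltn y) c.
Proof.
rewrite (sorted_pairwise ltn_trans) pairwise_cat pairwise_cons allrel_consr.
by case/and3P=> /andP[Ha _] _ /andP[Hc _].
Qed.

Lemma sq_lt_cat_cons (a c : seq nat) (x y : nat) :
  x < y -> sorted ltn (a ++ y :: c) -> sq_lt (a ++ x :: c) (a ++ y :: c).
Proof.
move=> xy /sorted_ltn_cat_cons[/allP ay /allP yc].
exists y; split=> [|| z yz].
- by rewrite mem_cat mem_head orbT.
- rewrite mem_cat in_cons negb_or gtn_eqF //=.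
  by apply/andP; split; apply/negP; [move/ay|move/yc]; rewrite /= ltnn.
- by rewrite !mem_cat !in_cons !gtn_eqF // (ltn_trans xy).
Qed.

Lemma compressed_in_replace (k e : nat) (G : seq nat -> bool)
    (a c : seq nat) (x y : nat) :
  compressed_in k e G -> x < y ->
  G (a ++ y :: c) -> dset k e (a ++ x :: c) -> G (a ++ x :: c).
Proof.
move=> [GP Gdown] xy Gy dx; apply: (Gdown _ _ Gy dx).
by apply: sq_lt_cat_cons xy _; case/and3P: (GP _ Gy).
Qed.

Lemma dset_cons (k e x : nat) (u : seq nat) :
  dset k e.+1 (x :: u) = (k < x) && dset x e u.
Proof.
rewrite /dset /= (path_sortedE ltn_trans) eqSS.
have [kx|] /= := ltnP k x; last by rewrite !andbF.
case xu: (all _ u); rewrite ?andbF //= (sub_all _ xu) ?andbT // => z.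
exact: ltn_trans.
Qed.

Lemma dset_rcons (k e y : nat) (u : seq nat) :
  dset k e.+1 (rcons u y) = [&& dset k e u, all (ltn^~ y) u & k < y].
Proof.
rewrite /dset (sorted_pairwise ltn_trans) pairwise_rcons -(sorted_pairwise ltn_trans).
rewrite size_rcons eqSS all_rcons.
by case: (sorted ltn u) (size u == e) (k < y) (all (ltn k) u) (all (ltn^~ y) u)
  => [] [] [] [] [].
Qed.

Lemma dsetW (k l e : nat) (u : seq nat) : k <= l -> dset l e u -> dset k e u.
Proof.
move=> kl /and3P[su eu lu]; rewrite /dset su eu /=.
by apply/allP=> z /(allP lu); apply: leq_ltn_trans.
Qed.

Lemma left_sliceE (d : nat) (F : seq (seq nat)) (k : nat) (u : seq nat) :
  left_slice d F k u = dset k d.-1 u && ((k :: u) \in F).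
Proof.
rewrite /left_slice andbA; congr (_ && _).
apply/andP/idP=> [[/and3P[su eu _] ku]|du]; first by rewrite /dset su eu ku.
by split; [apply: dsetW du|case/and3P: du].
Qed.

Lemma dset_cat_cons_mix (k e : nat) (a s t : seq nat) (x y : nat) :
  x <= y -> dset k e (a ++ x :: s) -> dset k e (a ++ y :: t) ->
  dset k e (a ++ x :: t).
Proof.
move=> xy /and3P[sx _ kx] /and3P[sy /eqP <- ky].
rewrite /dset !size_cat /= eqxx /=.
apply/andP; split.
- move: sx sy; rewrite !sorted_cat_cons => /andP[-> _] /andP[_].
  by case: t {ky} => //= z t /andP[yz ->]; rewrite andbT (leq_ltn_trans xy).
- by move: kx ky; rewrite !all_cat /= => /and3P[-> -> _] /and3P[_ _ ->].
Qed.

Lemma borel_closed (k e : nat) (G : seq nat -> bool) :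
  (forall u, G u -> dset k e u) ->
  (forall a c x y, x < y -> G (a ++ y :: c) -> dset k e (a ++ x :: c) ->
     G (a ++ x :: c)) ->
  forall u v, G u -> dset k e v -> borel_le v u -> G v.
Proof.
move=> GP Greplace u v Gu dv vu.
suff closed_cat a : G (a ++ u) -> dset k e (a ++ v) -> G (a ++ v).
  exact: (closed_cat [::]).
elim: v u vu a {Gu dv} => [|x v IH] [|y u] //= /andP[xy vu] a Gu dv.
have dxu : dset k e (a ++ x :: u) := dset_cat_cons_mix xy dv (GP _ Gu).
have Gxu : G (a ++ x :: u).
  by case: ltngtP xy => // [xy _|-> _]; [apply: Greplace xy Gu dxu|].
by rewrite -cat_rcons; apply: (IH u vu); rewrite cat_rcons.
Qed.

Section CompressedReplacement.

Variables (d : nat) (F : seq (seq nat)).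
Hypothesis F_dset : forall u, u \in F -> dset 0 d u.

Lemma left_compressed_replace (k : nat) (a : seq nat) (x y : nat) :
  left_compressed d F -> x < y ->
  (k :: a ++ [:: y]) \in F -> dset 0 d (k :: a ++ [:: x]) ->
  (k :: a ++ [:: x]) \in F.
Proof.
move=> hL xy Fy dx.
have d_pos : 0 < d by case/and3P: dx => _ /eqP <-.
have dcons u : dset 0 d (k :: u) = (0 < k) && dset k d.-1 u.
  by rewrite -dset_cons prednK.
move: dx (F_dset Fy); rewrite !dcons => /andP[k_pos dx] /andP[_ dy].
suff : left_slice d F k (a ++ [:: x]) by rewrite left_sliceE => /andP[].
by apply: compressed_in_replace (hL k k_pos) xy _ dx; rewrite left_sliceE dy.
Qed.

Lemma right_compressed_replace (k : nat) (a c : seq nat) (x y : nat) :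
  right_compressed d F -> x < y ->
  rcons (a ++ y :: c) k \in F -> dset 0 d (rcons (a ++ x :: c) k) ->
  rcons (a ++ x :: c) k \in F.
Proof.
move=> hR xy Fy dx.
have d_pos : 0 < d by move: dx => /and3P[_ /eqP <- _]; rewrite size_rcons.
have drcons u : dset 0 d (rcons u k) = [&& dset 0 d.-1 u, all (ltn^~ k) u & 0 < k].
  by rewrite -dset_rcons prednK.
move: dx (F_dset Fy); rewrite !drcons => /and3P[dx xk k_pos] /and3P[dy yk _].
have /and3P[_ _ //] : right_slice d F k (a ++ x :: c).
by apply: compressed_in_replace (hR k k_pos) xy _ dx; rewrite /right_slice dy yk.
Qed.

End CompressedReplacement.

Theorem lemma3p9 (d : nat) (F : seq (seq nat)) :
  2 <= d ->
  (forall u, u \in F -> dset 0 d u) ->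
  left_compressed d F ->
  right_compressed d F ->
  shifted d F.
Proof.
move=> d_ge2 F_dset hL hR.
apply: (@borel_closed 0 d (fun u : seq nat => u \in F) F_dset) => a c x y xy.
case: c / lastP => [|c k].
  case: a => [|k a] /= Fy dx.
    by move: d_ge2; case/and3P: dx => _ /eqP <-.
  exact (left_compressed_replace F_dset hL xy Fy dx).
rewrite -!rcons_cons -!rcons_cat.
exact (right_compressed_replace F_dset hR xy).
Qed.
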